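(* Let $X$ be a complex Banach space, $\alpha>0$ and $T\in\mathcal{B}(X)$ a $(C,\alpha)$-bounded operator. Then $\|T^j\|=O(j^\alpha)$ as $j\to\infty$. Moreover, if $(a(j))_{j\ge0}$ is a complex sequence with $\sum_{j\ge0}j^\alpha|a(j)|<\infty$, then $\sum_{j\ge0}a(j)T^j$ converges in operator norm and $\theta_\alpha(a)=\sum_{j=0}^\infty a(j)T^j$.
   Context: For $\gamma\in\mathbb{R}$, $k^\gamma(0)=1$, $k^\gamma(n)=\frac{\gamma(\gamma+1)\cdots(\gamma+n-1)}{n!}$ for $n\ge1$. For $T\in\mathcal{B}(X)$, $\Delta^{-\alpha}\mathcal{T}(n)=\sum_{j=0}^nk^\alpha(n-j)T^j$, $M_T^\alpha(n)=\Delta^{-\alpha}\mathcal{T}(n)/k^{\alpha+1}(n)$; $T$ is $(C,\alpha)$-bounded if $\sup_n\|M_T^\alpha(n)\|<\infty$. For a sequence $f$ on $\mathbb{N}_0$ (extended by zero): $W_+f(n)=f(n)-f(n+1)$, $W_+^m$ its powers; for $\alpha>0$, $W_+^{-\alpha}f(n)=\sum_{j\ge n}k^\alpha(j-n)f(j)$, $W_+^\alpha f=W_+^mW_+^{-(m-\alpha)}f$ with $m=[\alpha]+1$. For $f$ with $\sum_{n\ge0}k^{\alpha+1}(n)|W_+^\alpha f(n)|<\infty$, $\theta_\alpha(f)=\sum_{n=0}^\infty W_+^\alpha f(n)\,\Delta^{-\alpha}\mathcal{T}(n)$ (norm convergent). *)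

From Stdlib Require Import Reals Lra Lia ZArith Classical ClassicalEpsilon
  FunctionalExtensionality.
Open Scope R_scope.
Set Implicit Arguments.

Record Cplx : Type := mkC { Cre : R; Cim : R }.
Definition C0 : Cplx := mkC 0 0.
Definition C1 : Cplx := mkC 1 0.
Definition RtoC (r : R) : Cplx := mkC r 0.
Definition Cadd (a b : Cplx) : Cplx := mkC (Cre a + Cre b) (Cim a + Cim b).
Definition Copp (a : Cplx) : Cplx := mkC (- Cre a) (- Cim a).
Definition Csub (a b : Cplx) : Cplx := Cadd a (Copp b).
Definition Cmul (a b : Cplx) : Cplx :=
  mkC (Cre a * Cre b - Cim a * Cim b) (Cre a * Cim b + Cim a * Cre b).
Definition Cmod (a : Cplx) : R := sqrt (Cre a * Cre a + Cim a * Cim a).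

Fixpoint Csum (u : nat -> Cplx) (n : nat) : Cplx :=
  match n with
  | O => u O
  | S p => Cadd (Csum u p) (u (S p))
  end.

Definition Cconv (u : nat -> Cplx) (l : Cplx) : Prop :=
  forall eps, eps > 0 -> exists N, forall n, (n >= N)%nat -> Cmod (Csub (u n) l) < eps.

(* value of the series sum_{i>=0} u i when it converges (0 otherwise) *)
Definition Cseries (u : nat -> Cplx) : Cplx :=
  match excluded_middle_informative (exists l, Cconv (Csum u) l) with
  | left h => proj1_sig (constructive_indefinite_description _ h)
  | right _ => C0
  end.

Record CBanach : Type := {
  cb_car :> Type;
  cb_zero : cb_car;
  cb_add : cb_car -> cb_car -> cb_car;
  cb_opp : cb_car -> cb_car;
  cb_scal : Cplx -> cb_car -> cb_car;
  cb_norm : cb_car -> R;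
  cb_add_assoc : forall x y z, cb_add x (cb_add y z) = cb_add (cb_add x y) z;
  cb_add_comm : forall x y, cb_add x y = cb_add y x;
  cb_add_zero : forall x, cb_add x cb_zero = x;
  cb_add_opp : forall x, cb_add x (cb_opp x) = cb_zero;
  cb_scal_one : forall x, cb_scal C1 x = x;
  cb_scal_assoc : forall a b x, cb_scal a (cb_scal b x) = cb_scal (Cmul a b) x;
  cb_scal_addv : forall a x y, cb_scal a (cb_add x y) = cb_add (cb_scal a x) (cb_scal a y);
  cb_scal_adds : forall a b x, cb_scal (Cadd a b) x = cb_add (cb_scal a x) (cb_scal b x);
  cb_norm_nonneg : forall x, 0 <= cb_norm x;
  cb_norm_eq0 : forall x, cb_norm x = 0 -> x = cb_zero;
  cb_norm_scal : forall a x, cb_norm (cb_scal a x) = Cmod a * cb_norm x;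
  cb_norm_triangle : forall x y, cb_norm (cb_add x y) <= cb_norm x + cb_norm y;
  cb_complete : forall u : nat -> cb_car,
    (forall eps, eps > 0 -> exists N, forall m n, (m >= N)%nat -> (n >= N)%nat ->
        cb_norm (cb_add (u m) (cb_opp (u n))) < eps) ->
    exists l, forall eps, eps > 0 -> exists N, forall n, (n >= N)%nat ->
        cb_norm (cb_add (u n) (cb_opp l)) < eps
}.

Section Ops.
Variable X : CBanach.
Local Notation "x + y" := (cb_add X x y).

Definition vsub (x y : X) : X := cb_add X x (cb_opp X y).

Definition is_bounded_op (T : X -> X) : Prop :=
  (forall x y, T (x + y) = T x + T y) /\
  (forall (a : Cplx) x, T (cb_scal X a x) = cb_scal X a (T x)) /\
  (exists M, forall x, cb_norm X (T x) <= M * cb_norm X (x)).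

(* operator norm: ||S|| = sup { ||S x|| : ||x|| <= 1 } (0 if the sup does not exist) *)
Definition opnorm (S : X -> X) : R :=
  let E := fun r => exists x, cb_norm X (x) <= 1 /\ r = cb_norm X (S x) in
  match excluded_middle_informative (exists l, is_lub E l) with
  | left h => proj1_sig (constructive_indefinite_description _ h)
  | right _ => 0
  end.

Definition opsub (S U : X -> X) : X -> X := fun x => vsub (S x) (U x).
Definition opscal (a : Cplx) (S : X -> X) : X -> X := fun x => cb_scal X a (S x).

Definition oppow (T : X -> X) (j : nat) : X -> X := Nat.iter j T.

Fixpoint opsum (F : nat -> X -> X) (n : nat) : X -> X :=
  match n with
  | O => F O
  | S p => fun x => opsum F p x + F (S p) x
  end.

Definition opseries_conv (F : nat -> X -> X) (S : X -> X) : Prop :=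
  Un_cv (fun n => opnorm (opsub (opsum F n) S)) 0.
End Ops.
Arguments vsub {X}. Arguments is_bounded_op {X}. Arguments opnorm {X}.
Arguments opsub {X}. Arguments opscal {X}. Arguments oppow {X}.
Arguments opsum {X}. Arguments opseries_conv {X}.

(* k^g(0) = 1, k^g(n) = g(g+1)...(g+n-1)/n! *)
Fixpoint kC (g : R) (n : nat) : R :=
  match n with
  | O => 1
  | S p => kC g p * (g + INR p) / INR (S p)
  end.

Definition DeltaT (X : CBanach) (a : R) (T : X -> X) (n : nat) : X -> X :=
  opsum (fun j => opscal (RtoC (kC a (n - j)%nat)) (oppow T j)) n.

Arguments DeltaT {X}.

Definition MT (X : CBanach) (a : R) (T : X -> X) (n : nat) : X -> X :=
  opscal (RtoC (/ kC (a + 1) n)) (DeltaT a T n).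

Arguments MT {X}.

Definition Ca_bounded (X : CBanach) (a : R) (T : X -> X) : Prop :=
  exists K, forall n, opnorm (MT a T n) <= K.

Arguments Ca_bounded {X}.

Definition Wp (f : nat -> Cplx) : nat -> Cplx := fun n => Csub (f n) (f (S n)).

Definition Wneg (b : R) (f : nat -> Cplx) : nat -> Cplx :=
  fun n => Cseries (fun i => Cmul (RtoC (kC b i)) (f (n + i)%nat)).

(* m = [a] + 1  (up a = floor a + 1) *)
Definition mfrac (a : R) : nat := Z.to_nat (up a).

Definition Walpha (a : R) (f : nat -> Cplx) : nat -> Cplx :=
  Nat.iter (mfrac a) Wp (Wneg (INR (mfrac a) - a) f).

(* j^a for natural j (with 0^a = 0, a > 0) *)
Definition npow (j : nat) (a : R) : R :=
  match j with O => 0 | _ => Rpower (INR j) a end.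

Definition Rsummable (u : nat -> R) : Prop := exists l, Un_cv (sum_f_R0 u) l.

(* Write k^b for the Cesaro kernel. Since k^a * k^b = k^{a+b} and k^0 is the
   unit of convolution, T^n = sum_{m<=n} k^{-alpha}(n-m) Delta^{-alpha}T(m).
   Together with ||Delta^{-alpha}T(m)|| <= K k^{alpha+1}(m) <= K k^{alpha+1}(n)
   and sum_i |k^{-alpha}(i)| < oo this gives ||T^n|| <= C k^{alpha+1}(n), and
   k^{alpha+1}(n) <= e^alpha n^alpha.  In particular sum_j a(j) T^j converges
   as soon as sum_j k^{alpha+1}(j) |a(j)| does, which the hypothesis on a
   ensures.
   By Pascal's rule every difference W_+ lowers the order of W_+^{-b} by one,
   so W_+^alpha a(n) = sum_i k^{-alpha}(i) a(n+i).  Split a into its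
   truncation at N and the rest: for the truncation, the inversion formula
   above, read as a summation by parts, turns the N-th partial sum of
   theta_alpha(a) into the N-th partial sum of sum_j a(j) T^j; the rest
   contributes O(sum_{j>N} k^{alpha+1}(j) |a(j)|). *)

From Stdlib Require Import Reals Lra Lia ZArith ClassicalEpsilon.
Open Scope R_scope.

(** * Real sums and sequences *)

Lemma Ropp_le_Rabs x : - x <= Rabs x.
Proof. rewrite <- Rabs_Ropp. apply Rle_abs. Qed.

Lemma ln_le_sub_1 y : 0 < y -> ln y <= y - 1.
Proof.
  intros Hy. destruct (Rle_or_lt (ln y) (y - 1)) as [H|H]; auto.
  apply exp_increasing in H. rewrite exp_ln in H by auto.
  pose proof (exp_ineq1_le (y - 1)). lra.
Qed.

Lemma sum_f_R0_recl (f : nat -> R) n :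
  sum_f_R0 f (S n) = f O + sum_f_R0 (fun i => f (S i)) n.
Proof. induction n; simpl in *; [ring | rewrite IHn; ring]. Qed.

Lemma sum_f_R0_scal_l c (f : nat -> R) N :
  sum_f_R0 (fun i => c * f i) N = c * sum_f_R0 f N.
Proof. rewrite scal_sum. apply sum_eq; intros; ring. Qed.

Lemma sum_f_R0_le_mono (f : nat -> R) n m :
  (forall i, 0 <= f i) -> (n <= m)%nat -> sum_f_R0 f n <= sum_f_R0 f m.
Proof. intros H Hnm; induction Hnm; [lra | simpl; specialize (H (S m)); lra]. Qed.

Lemma term_le_sum_f_R0 (f : nat -> R) i n :
  (forall j, 0 <= f j) -> (i <= n)%nat -> f i <= sum_f_R0 f n.
Proof.
  intros H Hi; induction Hi.
  - destruct i; simpl; [lra|]. pose proof (cond_pos_sum f i H). lra.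
  - simpl. specialize (H (S m)). lra.
Qed.

Lemma sum_f_R0_zero_after (f : nat -> R) M n :
  (M <= n)%nat -> (forall i, (M < i)%nat -> f i = 0) -> sum_f_R0 f n = sum_f_R0 f M.
Proof. intros Hn H; induction Hn; [reflexivity | simpl; rewrite IHHn, H by lia; ring]. Qed.

Lemma sum_f_R0_rev (f : nat -> R) n :
  sum_f_R0 (fun i => f (n - i)%nat) n = sum_f_R0 f n.
Proof.
  revert f; induction n; intros f; [reflexivity|].
  rewrite sum_f_R0_recl, Nat.sub_0_r. simpl (S n - S _)%nat.
  rewrite (IHn f). simpl. ring.
Qed.

Lemma sum_f_R0_exchange (f : nat -> nat -> R) N J :
  sum_f_R0 (fun n => sum_f_R0 (fun j => f n j) J) N =
  sum_f_R0 (fun j => sum_f_R0 (fun n => f n j) N) J.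
Proof. induction N; simpl; [reflexivity | rewrite IHN, plus_sum; reflexivity]. Qed.

Lemma sum_f_R0_shift_le (h : nat -> R) N j :
  (forall i, 0 <= h i) -> sum_f_R0 (fun n => h (n + j)%nat) N <= sum_f_R0 h (N + j).
Proof.
  revert h; induction j; intros h Hh.
  - rewrite Nat.add_0_r. right. apply sum_eq. intros; f_equal; lia.
  - replace (N + S j)%nat with (S (N + j)) by lia. rewrite sum_f_R0_recl.
    pose proof (IHj (fun i => h (S i)) (fun i => Hh (S i))) as IH.
    rewrite (sum_eq _ (fun n => h (S (n + j)))) by (intros; f_equal; lia).
    pose proof (Hh O). lra.
Qed.

Lemma sum_f_R0_after_le (w : nat -> R) L M N :
  (forall i, 0 <= w i) -> (forall N, sum_f_R0 w N <= L) ->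
  sum_f_R0 (fun m => if (m <=? M)%nat then 0 else w m) N <= L - sum_f_R0 w M.
Proof.
  intros Hw HL.
  assert (Hs : forall i, 0 <= (if (i <=? M)%nat then 0 else w i))
    by (intros i; destruct (i <=? M)%nat; auto; lra).
  apply Rle_trans with (sum_f_R0 (fun m => if (m <=? M)%nat then 0 else w m) (N + M)).
  { apply sum_f_R0_le_mono; auto; lia. }
  assert (Hhead : sum_f_R0 (fun m => if (m <=? M)%nat then w m else 0) (N + M) = sum_f_R0 w M).
  { rewrite (sum_f_R0_zero_after _ M) by
      (lia || (intros i Hi; destruct (Nat.leb_spec i M); [lia | reflexivity])).
    apply sum_eq. intros i Hi. destruct (Nat.leb_spec i M); [reflexivity | lia]. }
  assert (Hsplit : sum_f_R0 w (N + M) =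
    sum_f_R0 (fun m => if (m <=? M)%nat then 0 else w m) (N + M) +
    sum_f_R0 (fun m => if (m <=? M)%nat then w m else 0) (N + M)).
  { rewrite <- plus_sum. apply sum_eq. intros i _. destruct (i <=? M)%nat; ring. }
  specialize (HL (N + M)%nat). lra.
Qed.

Lemma Un_cv_const c : Un_cv (fun _ => c) c.
Proof. intros e He. exists O. intros. unfold Rdist. rewrite Rminus_diag, Rabs_R0. lra. Qed.

Lemma Un_cv_ub u l b : Un_cv u l -> (forall n, u n <= b) -> l <= b.
Proof. intros H Hb. apply (Rle_cv_lim Hb H (Un_cv_const b)). Qed.

Lemma Un_cv_scal_l (u : nat -> R) l c : Un_cv u l -> Un_cv (fun n => c * u n) (c * l).
Proof. intros H. apply CV_mult; [apply Un_cv_const | exact H]. Qed.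

Lemma Un_cv_sum_f_R0 (y : nat -> nat -> R) (x : nat -> R) N :
  (forall n, (n <= N)%nat -> Un_cv (fun J => y J n) (x n)) ->
  Un_cv (fun J => sum_f_R0 (fun n => y J n) N) (sum_f_R0 x N).
Proof.
  induction N; intros H; simpl; [apply H; lia|].
  apply CV_plus; [apply IHN; intros; apply H | apply H]; lia.
Qed.

Lemma Un_cv_0_squeeze (w t : nat -> R) c :
  (forall n, 0 <= w n <= c * t n) -> Un_cv t 0 -> Un_cv w 0.
Proof.
  intros H Ht e He. destruct (Ht (e / (Rabs c + 1))) as [N HN].
  { apply Rdiv_lt_0_compat; auto. pose proof (Rabs_pos c); lra. }
  exists N. intros n Hn. specialize (HN n Hn). specialize (H n). unfold Rdist in *.
  rewrite Rminus_0_r in *. rewrite Rabs_right by lra.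
  assert (c * t n <= Rabs c * Rabs (t n)) by (rewrite <- Rabs_mult; apply Rle_abs).
  assert (Rabs c * Rabs (t n) <= Rabs c * (e / (Rabs c + 1)))
    by (apply Rmult_le_compat_l; [apply Rabs_pos | lra]).
  assert (Rabs c * (e / (Rabs c + 1)) < e).
  { pose proof (Rabs_pos c).
    replace (Rabs c * (e / (Rabs c + 1))) with (e - e / (Rabs c + 1)) by (field; lra).
    pose proof (Rdiv_lt_0_compat e (Rabs c + 1) He ltac:(lra)). lra. }
  lra.
Qed.

Lemma series_cv_dominated (f c : nat -> R) M :
  (forall i, Rabs (f i) <= c i) -> (forall n, sum_f_R0 c n <= M) ->
  exists l, Un_cv (sum_f_R0 f) l.
Proof.
  intros Hf HM.
  assert (Hc : forall i, 0 <= c i)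
    by (intros i; pose proof (Hf i); pose proof (Rabs_pos (f i)); lra).
  assert (Hfc : forall i, 0 <= f i + c i)
    by (intros i; pose proof (Hf i); pose proof (Ropp_le_Rabs (f i)); lra).
  destruct (growing_cv (sum_f_R0 c)) as [lc Hlc].
  { intros n; simpl; pose proof (Hc (S n)); lra. }
  { exists M; intros x [n ->]; auto. }
  destruct (growing_cv (sum_f_R0 (fun i => f i + c i))) as [ld Hld].
  { intros n; simpl. pose proof (Hfc (S n)). lra. }
  { exists (2 * M); intros x [n ->]. rewrite plus_sum.
    assert (sum_f_R0 f n <= sum_f_R0 c n)
      by (apply sum_Rle; intros i _; pose proof (Hf i); pose proof (Rle_abs (f i)); lra).
    pose proof (HM n). lra. }
  exists (ld - lc). eapply Un_cv_ext; [|apply (CV_minus _ _ _ _ Hld Hlc)].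
  intros n; simpl. rewrite plus_sum. ring.
Qed.

(** * The Cesaro kernel *)

Lemma kC_S g p : kC g (S p) = kC g p * (g + INR p) / INR (S p).
Proof. reflexivity. Qed.

Lemma kC_S_shift a n : kC a (S n) = kC (a + 1) n * a / INR (S n).
Proof.
  induction n.
  - rewrite kC_S. simpl. field.
  - rewrite kC_S, IHn, (kC_S (a + 1) n), !S_INR.
    pose proof (pos_INR n). field. lra.
Qed.

Lemma kC_pascal g i : kC g (S i) = kC g i + kC (g - 1) (S i).
Proof.
  rewrite (kC_S_shift (g - 1)). replace (g - 1 + 1) with g by ring.
  rewrite kC_S, S_INR. pose proof (pos_INR i). field. lra.
Qed.

Lemma kC_0_S n : kC 0 (S n) = 0.
Proof.
  induction n; rewrite kC_S; [simpl; field | rewrite IHn; field].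
  apply not_0_INR; lia.
Qed.

(* Chu-Vandermonde: both sides satisfy the recurrence
   (n+1) c(n+1) = (a + b + n) c(n). *)
Lemma kC_convolution a b n :
  sum_f_R0 (fun i => kC a i * kC b (n - i)) n = kC (a + b) n.
Proof.
  induction n; [simpl; ring|].
  assert (Hrec : INR (S n) * sum_f_R0 (fun i => kC a i * kC b (S n - i)) (S n) =
                 (a + b + INR n) * sum_f_R0 (fun i => kC a i * kC b (n - i)) n).
  { transitivity (sum_f_R0 (fun i => INR i * kC a i * kC b (S n - i)) (S n) +
                  sum_f_R0 (fun i => kC a i * (INR (S n - i) * kC b (S n - i))) (S n)).
    { rewrite <- plus_sum, scal_sum. apply sum_eq. intros i Hi.
      rewrite minus_INR by lia. ring. }
    rewrite sum_f_R0_recl, tech5, Nat.sub_diag. simpl INR at 1. simpl INR at 3.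
    assert (E1 : sum_f_R0 (fun i => INR (S i) * kC a (S i) * kC b (S n - S i)) n
              = sum_f_R0 (fun i => (a + INR i) * kC a i * kC b (n - i)) n).
    { apply sum_eq; intros i Hi. rewrite kC_S. simpl (S n - S i)%nat.
      field. apply not_0_INR; lia. }
    assert (E2 : sum_f_R0 (fun i => kC a i * (INR (S n - i) * kC b (S n - i))) n
              = sum_f_R0 (fun i => kC a i * ((b + INR (n - i)) * kC b (n - i))) n).
    { apply sum_eq; intros i Hi. replace (S n - i)%nat with (S (n - i)) by lia.
      rewrite kC_S. field. apply not_0_INR; lia. }
    rewrite E1, E2, scal_sum.
    transitivity (sum_f_R0 (fun i => (a + INR i) * kC a i * kC b (n - i)) n +
                  sum_f_R0 (fun i => kC a i * ((b + INR (n - i)) * kC b (n - i))) n); [ring|].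
    rewrite <- plus_sum. apply sum_eq. intros i Hi.
    rewrite minus_INR by lia. ring. }
  rewrite IHn in Hrec. rewrite kC_S.
  assert (INR (S n) <> 0) by (apply not_0_INR; lia).
  apply (Rmult_eq_reg_l (INR (S n))); [rewrite Hrec; field; auto | auto].
Qed.

Lemma kC_bounded g : g <= 1 -> exists C, forall i, Rabs (kC g i) <= C.
Proof.
  intros Hg. destruct (INR_unbounded (- g)) as [N HN].
  set (f := fun j => Rabs (kC g j)).
  assert (Hf : forall j, 0 <= f j) by (intros; apply Rabs_pos).
  exists (sum_f_R0 f N). intros i. induction i.
  - apply (term_le_sum_f_R0 f); auto; lia.
  - destruct (le_lt_dec (S i) N) as [Hi|Hi]; [apply (term_le_sum_f_R0 f); auto|].
    (* for i >= -g the factor (g + i)/(i + 1) lies in [0, 1] *)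
    assert (HI : INR N <= INR i) by (apply le_INR; lia).
    assert (Hq : 0 <= (g + INR i) * / INR (S i) <= 1).
    { rewrite S_INR. pose proof (pos_INR i).
      assert (0 < / (INR i + 1)) by (apply Rinv_0_lt_compat; lra).
      split; [apply Rmult_le_pos; lra|].
      apply (Rmult_le_reg_r (INR i + 1)); [lra|].
      rewrite Rmult_assoc, Rinv_l by lra. lra. }
    unfold f in *. rewrite kC_S. unfold Rdiv. rewrite Rmult_assoc, Rabs_mult.
    rewrite (Rabs_right ((g + INR i) * / INR (S i))) by lra.
    pose proof (Rabs_pos (kC g i)). nra.
Qed.

Lemma kC_pos g n : 0 < g -> 0 < kC g n.
Proof.
  intros Hg. induction n; [simpl; lra|]. rewrite kC_S. pose proof (pos_INR n).
  apply Rdiv_lt_0_compat; [apply Rmult_lt_0_compat; lra | apply lt_0_INR; lia].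
Qed.

Lemma kC_le_S g n : 1 <= g -> kC g n <= kC g (S n).
Proof.
  intros Hg. pose proof (kC_pos g n ltac:(lra)). pose proof (pos_INR n).
  rewrite kC_S, S_INR. apply (Rmult_le_reg_r (INR n + 1)); [lra|].
  unfold Rdiv. rewrite Rmult_assoc, Rinv_l by lra. nra.
Qed.

Lemma kC_mono g n m : 1 <= g -> (n <= m)%nat -> kC g n <= kC g m.
Proof.
  intros Hg H; induction H; [lra|]. pose proof (kC_le_S g m Hg). lra.
Qed.

Lemma kC_ge_1 g m : 1 <= g -> 1 <= kC g m.
Proof. intros Hg. apply (kC_mono g O m Hg). lia. Qed.

(* Induction on n, using 1 + A/(m+1) <= exp (A (ln (m+1) - ln m)). *)
Lemma kC_le_exp_npow A n : 0 < A -> kC (A + 1) (S n) <= exp A * npow (S n) A.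
Proof.
  intros HA. unfold npow, Rpower. rewrite <- exp_plus.
  induction n.
  - rewrite kC_S. simpl INR. rewrite ln_1, Rmult_0_r, Rplus_0_r.
    pose proof (exp_ineq1_le A). simpl kC. rewrite Rplus_0_r. lra.
  - rewrite kC_S.
    set (m := INR (S n)). assert (Hm : 0 < m) by (apply lt_0_INR; lia).
    replace (INR (S (S n))) with (m + 1) by (unfold m; rewrite (S_INR (S n)); ring).
    set (d := ln (m + 1) - ln m).
    assert (Hd : / (m + 1) <= d).
    { unfold d. assert (Hq : 0 < m / (m + 1)) by (apply Rdiv_lt_0_compat; lra).
      assert (ln m = ln (m / (m + 1)) + ln (m + 1)).
      { rewrite <- ln_mult by lra. f_equal. field. lra. }
      pose proof (ln_le_sub_1 _ Hq).
      replace (m / (m + 1) - 1) with (- / (m + 1)) in * by (field; lra). lra. }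
    assert (E : exp (A + A * ln (m + 1)) = exp (A + A * ln m) * exp (A * d))
      by (rewrite <- exp_plus; f_equal; unfold d; ring).
    assert (Hstep : 1 + A / (m + 1) <= exp (A * d)).
    { pose proof (exp_ineq1_le (A * d)).
      assert (A / (m + 1) <= A * d) by (apply Rmult_le_compat_l; lra). lra. }
    pose proof (kC_pos (A + 1) (S n) ltac:(lra)).
    assert (0 <= A / (m + 1)) by (left; apply Rdiv_lt_0_compat; lra).
    replace (kC (A + 1) (S n) * (A + 1 + m) / (m + 1))
      with (kC (A + 1) (S n) * (1 + A / (m + 1))) by (field; lra).
    fold m in IHn. rewrite E. apply Rmult_le_compat; lra.
Qed.

(* Beyond N0 >= A the kernel k^{-A} has constant sign, and Pascal's rule
   k^{1-A}(n+1) = k^{1-A}(n) + k^{-A}(n+1) makes the sum of the partial sum of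
   |k^{-A}| and |k^{1-A}(n)| constant from N0 on. *)
Lemma sum_abs_kC_opp_bounded A : 0 < A ->
  exists B, forall n, sum_f_R0 (fun i => Rabs (kC (- A) i)) n <= B.
Proof.
  intros HA. destruct (INR_unbounded A) as [N0 HN0].
  set (s := fun n => sum_f_R0 (fun i => Rabs (kC (- A) i)) n).
  set (g := fun n => Rabs (kC (1 - A) n)).
  assert (Hinv : forall k, s (k + N0)%nat + g (k + N0)%nat = s N0 + g N0).
  { induction k; [reflexivity|]. rewrite <- IHk.
    replace (S k + N0)%nat with (S (k + N0)) by lia. unfold s; rewrite tech5.
    fold (s (k + N0)%nat). unfold g.
    rewrite (kC_S_shift (- A)). replace (- A + 1) with (1 - A) by ring.
    rewrite kC_S. set (n := (k + N0)%nat).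
    assert (Hn : INR N0 <= INR n) by (apply le_INR; unfold n; lia).
    pose proof (pos_INR n). rewrite S_INR.
    unfold Rdiv; rewrite !Rabs_mult.
    rewrite (Rabs_left (- A)) by lra. rewrite (Rabs_right (1 - A + INR n)) by lra.
    rewrite (Rabs_right (/ (INR n + 1))) by (apply Rle_ge; left; apply Rinv_0_lt_compat; lra).
    field. lra. }
  assert (Hs : forall n, 0 <= g n) by (intros; apply Rabs_pos).
  exists (s N0 + g N0). intros n. fold (s n). destruct (le_lt_dec N0 n) as [Hn|Hn].
  - replace n with ((n - N0) + N0)%nat by lia. rewrite <- (Hinv (n - N0)%nat).
    specialize (Hs (n - N0 + N0)%nat). lra.
  - unfold s. specialize (Hs N0).
    pose proof (sum_f_R0_le_mono (fun i => Rabs (kC (- A) i)) n N0 (fun i => Rabs_pos _)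
      (Nat.lt_le_incl _ _ Hn)). fold (s N0) in *. lra.
Qed.

(** * Complex numbers and complex series *)

Lemma Cext (a b : Cplx) : Cre a = Cre b -> Cim a = Cim b -> a = b.
Proof. destruct a, b; simpl; intros; subst; reflexivity. Qed.

Ltac Csolve := apply Cext; simpl; ring.

Lemma Cmod_ge0 a : 0 <= Cmod a.
Proof. apply sqrt_pos. Qed.

Lemma Cmod_sq a : Cmod a * Cmod a = Cre a * Cre a + Cim a * Cim a.
Proof. unfold Cmod. apply sqrt_sqrt. nra. Qed.

Lemma Cmod_RtoC r : Cmod (RtoC r) = Rabs r.
Proof. unfold Cmod, RtoC; simpl. rewrite <- sqrt_Rsqr_abs. f_equal. unfold Rsqr; ring. Qed.

Lemma Cmod_C0 : Cmod C0 = 0.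
Proof. change C0 with (RtoC 0). rewrite Cmod_RtoC. apply Rabs_R0. Qed.

Lemma Cmod_mul a b : Cmod (Cmul a b) = Cmod a * Cmod b.
Proof.
  pose proof (Cmod_ge0 (Cmul a b)). pose proof (Cmod_ge0 a). pose proof (Cmod_ge0 b).
  assert (Cmod (Cmul a b) * Cmod (Cmul a b) = (Cmod a * Cmod b) * (Cmod a * Cmod b)).
  { replace (Cmod a * Cmod b * (Cmod a * Cmod b)) with
      ((Cmod a * Cmod a) * (Cmod b * Cmod b)) by ring.
    rewrite !Cmod_sq. destruct a, b; simpl; ring. }
  apply Rsqr_inj; auto. apply Rmult_le_pos; auto.
Qed.

Lemma Cmod_opp a : Cmod (Copp a) = Cmod a.
Proof. unfold Cmod; destruct a; simpl; f_equal; ring. Qed.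

Lemma Cmod_triangle a b : Cmod (Cadd a b) <= Cmod a + Cmod b.
Proof.
  pose proof (Cmod_ge0 a). pose proof (Cmod_ge0 b). pose proof (Cmod_ge0 (Cadd a b)).
  pose proof (Cmod_sq a). pose proof (Cmod_sq b). pose proof (Cmod_sq (Cadd a b)).
  set (p := Cmod a) in *. set (q := Cmod b) in *. set (r := Cmod (Cadd a b)) in *.
  destruct a as [x1 y1], b as [x2 y2]; simpl in *.
  (* Cauchy-Schwarz for the real inner product of a and b *)
  assert (Hpq : x1 * x2 + y1 * y2 <= p * q).
  { assert ((x1 * x2 + y1 * y2) * (x1 * x2 + y1 * y2) <= (p * q) * (p * q)).
    { replace ((p * q) * (p * q)) with ((p * p) * (q * q)) by ring.
      rewrite H2, H3. pose proof (Rle_0_sqr (x1 * y2 - x2 * y1)). unfold Rsqr in *. nra. }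
    assert (Rabs (x1 * x2 + y1 * y2) <= Rabs (p * q)) by (apply Rsqr_le_abs_0; unfold Rsqr; lra).
    rewrite (Rabs_right (p * q)) in * by nra. pose proof (Rle_abs (x1 * x2 + y1 * y2)). lra. }
  assert (r * r <= (p + q) * (p + q)) by nra.
  nra.
Qed.

Lemma Cmod_Re a : Rabs (Cre a) <= Cmod a.
Proof.
  pose proof (Cmod_sq a). pose proof (Cmod_ge0 a).
  rewrite <- (sqrt_Rsqr_abs (Cre a)). rewrite <- (sqrt_square (Cmod a)) by auto.
  apply sqrt_le_1_alt. unfold Rsqr. nra.
Qed.

Lemma Cmod_Im a : Rabs (Cim a) <= Cmod a.
Proof.
  pose proof (Cmod_sq a). pose proof (Cmod_ge0 a).
  rewrite <- (sqrt_Rsqr_abs (Cim a)). rewrite <- (sqrt_square (Cmod a)) by auto.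
  apply sqrt_le_1_alt. unfold Rsqr. nra.
Qed.

Lemma Cmod_le_Re_Im a : Cmod a <= Rabs (Cre a) + Rabs (Cim a).
Proof.
  pose proof (Cmod_sq a). pose proof (Cmod_ge0 a).
  pose proof (Rabs_pos (Cre a)). pose proof (Rabs_pos (Cim a)).
  pose proof (Rsqr_abs (Cre a)). pose proof (Rsqr_abs (Cim a)). unfold Rsqr in *.
  nra.
Qed.

Lemma Cmod_sub_sym a b : Cmod (Csub a b) = Cmod (Csub b a).
Proof. replace (Csub a b) with (Copp (Csub b a)) by Csolve. apply Cmod_opp. Qed.

Lemma Csum_ext (u v : nat -> Cplx) n :
  (forall i, (i <= n)%nat -> u i = v i) -> Csum u n = Csum v n.
Proof.
  induction n; intros H; simpl; [apply H; lia|].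
  rewrite IHn by (intros; apply H; lia). rewrite H by lia. reflexivity.
Qed.

Lemma Csum_add (u v : nat -> Cplx) n :
  Csum (fun i => Cadd (u i) (v i)) n = Cadd (Csum u n) (Csum v n).
Proof. induction n; simpl; [reflexivity | rewrite IHn; Csolve]. Qed.

Lemma Csum_Re u n : Cre (Csum u n) = sum_f_R0 (fun i => Cre (u i)) n.
Proof. induction n; simpl; [reflexivity | rewrite IHn; reflexivity]. Qed.

Lemma Csum_Im u n : Cim (Csum u n) = sum_f_R0 (fun i => Cim (u i)) n.
Proof. induction n; simpl; [reflexivity | rewrite IHn; reflexivity]. Qed.

Lemma Csum_RtoC (f : nat -> R) n : Csum (fun i => RtoC (f i)) n = RtoC (sum_f_R0 f n).
Proof. induction n; simpl; [reflexivity | rewrite IHn; Csolve]. Qed.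

Lemma Cmod_Csum_le u n : Cmod (Csum u n) <= sum_f_R0 (fun i => Cmod (u i)) n.
Proof. induction n; simpl; [lra|]. pose proof (Cmod_triangle (Csum u n) (u (S n))). lra. Qed.

Lemma Csum_zero_after (u : nat -> Cplx) M n :
  (M <= n)%nat -> (forall i, (M < i)%nat -> u i = C0) -> Csum u n = Csum u M.
Proof. intros Hn H; induction Hn; [reflexivity | simpl; rewrite IHHn, H by lia; Csolve]. Qed.

Lemma Cconv_Re_Im u l :
  Cconv u l <-> Un_cv (fun n => Cre (u n)) (Cre l) /\ Un_cv (fun n => Cim (u n)) (Cim l).
Proof.
  split.
  - intros H; split; intros e He; destruct (H e He) as [N HN]; exists N; intros n Hn;
      specialize (HN n Hn); unfold Rdist, Rminus.
    + pose proof (Cmod_Re (Csub (u n) l)) as Hre. simpl in Hre. lra.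
    + pose proof (Cmod_Im (Csub (u n) l)) as Him. simpl in Him. lra.
  - intros [H1 H2] e He. destruct (H1 (e / 2) ltac:(lra)) as [N1 HN1].
    destruct (H2 (e / 2) ltac:(lra)) as [N2 HN2]. exists (N1 + N2)%nat. intros n Hn.
    specialize (HN1 n ltac:(lia)). specialize (HN2 n ltac:(lia)). unfold Rdist in *.
    unfold Rminus in *. pose proof (Cmod_le_Re_Im (Csub (u n) l)) as Hc. simpl in Hc. lra.
Qed.

Lemma Cconv_unique u l1 l2 : Cconv u l1 -> Cconv u l2 -> l1 = l2.
Proof.
  rewrite !Cconv_Re_Im. intros [A1 B1] [A2 B2].
  apply Cext; eapply UL_sequence; eauto.
Qed.

Lemma Cconv_add u v l1 l2 :
  Cconv u l1 -> Cconv v l2 -> Cconv (fun n => Cadd (u n) (v n)) (Cadd l1 l2).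
Proof. rewrite !Cconv_Re_Im. intros [A1 B1] [A2 B2]. split; apply CV_plus; auto. Qed.

Lemma Cconv_sub u v l1 l2 :
  Cconv u l1 -> Cconv v l2 -> Cconv (fun n => Csub (u n) (v n)) (Csub l1 l2).
Proof. rewrite !Cconv_Re_Im. intros [A1 B1] [A2 B2]. split; apply CV_minus; auto. Qed.

Lemma Cconv_shift u l : Cconv u l <-> Cconv (fun n => u (S n)) l.
Proof.
  split; intros H e He; destruct (H e He) as [N HN].
  - exists N. intros n Hn. apply HN. lia.
  - exists (S N). intros [|n] Hn; [lia | apply HN; lia].
Qed.

Lemma Cconv_ext u v l : (forall n, u n = v n) -> Cconv u l -> Cconv v l.
Proof. intros E H e He. destruct (H e He) as [N HN]. exists N. intros n Hn. rewrite <- E. auto. Qed.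

Lemma Cconv_stationary u M : (forall n, (M <= n)%nat -> u n = u M) -> Cconv u (u M).
Proof.
  intros H e He. exists M. intros n Hn. rewrite H by auto.
  replace (Csub (u M) (u M)) with C0 by Csolve. rewrite Cmod_C0. lra.
Qed.

Lemma Cconv_Cmod u l : Cconv u l -> Un_cv (fun n => Cmod (u n)) (Cmod l).
Proof.
  intros H e He. destruct (H e He) as [N HN]. exists N. intros n Hn. specialize (HN n Hn).
  unfold Rdist. pose proof (Cmod_triangle (Csub (u n) l) l) as H1.
  pose proof (Cmod_triangle (Csub l (u n)) (u n)) as H2.
  replace (Cadd (Csub (u n) l) l) with (u n) in H1 by Csolve.
  replace (Cadd (Csub l (u n)) (u n)) with l in H2 by Csolve.
  rewrite Cmod_sub_sym in H2. apply Rabs_def1; lra.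
Qed.

Lemma Cseries_eq u l : Cconv (Csum u) l -> Cseries u = l.
Proof.
  intros H. unfold Cseries. destruct excluded_middle_informative as [h|h].
  - destruct constructive_indefinite_description as [l' Hl']. simpl. eapply Cconv_unique; eauto.
  - exfalso; apply h; eauto.
Qed.

Lemma Cseries_abs_cv (u : nat -> Cplx) M :
  (forall n, sum_f_R0 (fun i => Cmod (u i)) n <= M) -> Cconv (Csum u) (Cseries u).
Proof.
  intros H.
  destruct (series_cv_dominated (fun i => Cre (u i)) (fun i => Cmod (u i)) M) as [l1 H1];
    auto using Cmod_Re.
  destruct (series_cv_dominated (fun i => Cim (u i)) (fun i => Cmod (u i)) M) as [l2 H2];
    auto using Cmod_Im.
  assert (Hl : Cconv (Csum u) (mkC l1 l2)).
  { apply Cconv_Re_Im; simpl. split.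
    - eapply Un_cv_ext; [|exact H1]. intros; rewrite Csum_Re; reflexivity.
    - eapply Un_cv_ext; [|exact H2]. intros; rewrite Csum_Im; reflexivity. }
  rewrite (Cseries_eq _ _ Hl). exact Hl.
Qed.

(** * Weyl fractional differences *)

Definition sum_Cmod_le (g : nat -> Cplx) (M : R) : Prop :=
  forall N, sum_f_R0 (fun i => Cmod (g i)) N <= M.

Lemma sum_Cmod_le_shift g M n :
  sum_Cmod_le g M -> sum_Cmod_le (fun i => g (n + i)%nat) M.
Proof.
  intros H N. eapply Rle_trans; [|apply (H (N + n)%nat)].
  rewrite (sum_eq _ (fun i => Cmod (g (i + n)%nat))) by (intros; rewrite Nat.add_comm; reflexivity).
  apply (sum_f_R0_shift_le (fun i => Cmod (g i))). intros; apply Cmod_ge0.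
Qed.

Lemma sum_Cmod_le_mono g h M :
  (forall j, Cmod (g j) <= Cmod (h j)) -> sum_Cmod_le h M -> sum_Cmod_le g M.
Proof. intros Hgh H N. eapply Rle_trans; [|apply H]. apply sum_Rle; auto. Qed.

Lemma Wneg_cv b g M n : b <= 1 -> sum_Cmod_le g M ->
  Cconv (Csum (fun i => Cmul (RtoC (kC b i)) (g (n + i)%nat))) (Wneg b g n).
Proof.
  intros Hb HM. destruct (kC_bounded b Hb) as [C HC].
  assert (HC0 : 0 <= C) by (specialize (HC O); pose proof (Rabs_pos (kC b 0)); lra).
  apply (Cseries_abs_cv _ (C * M)). intros N.
  apply Rle_trans with (sum_f_R0 (fun i => C * Cmod (g (n + i)%nat)) N).
  - apply sum_Rle. intros i _. rewrite Cmod_mul, Cmod_RtoC.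
    apply Rmult_le_compat_r; [apply Cmod_ge0 | auto].
  - rewrite sum_f_R0_scal_l. apply Rmult_le_compat_l; auto.
    apply (sum_Cmod_le_shift g M n HM).
Qed.

Lemma Wneg_add b f g h Mf Mg n : b <= 1 -> sum_Cmod_le f Mf -> sum_Cmod_le g Mg ->
  (forall j, h j = Cadd (f j) (g j)) -> Wneg b h n = Cadd (Wneg b f n) (Wneg b g n).
Proof.
  intros Hb Hf Hg Hh. apply Cseries_eq.
  eapply Cconv_ext; [|apply Cconv_add; [apply (Wneg_cv b f Mf n) | apply (Wneg_cv b g Mg n)]]; auto.
  intros N. cbv beta. rewrite <- Csum_add. apply Csum_ext. intros i _. rewrite Hh. Csolve.
Qed.

Lemma Wneg_finite b g M n : (n <= M)%nat -> (forall j, (M < j)%nat -> g j = C0) ->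
  Wneg b g n = Csum (fun l => Cmul (RtoC (kC b l)) (g (n + l)%nat)) (M - n).
Proof.
  intros Hn Hg. apply Cseries_eq. apply Cconv_stationary. intros N HN.
  apply Csum_zero_after; auto. intros i Hi. rewrite Hg by lia. Csolve.
Qed.

(* Pascal's rule k^b(i+1) = k^b(i) + k^{b-1}(i+1) telescopes the difference. *)
Lemma Wp_Wneg b g M n : b <= 1 -> sum_Cmod_le g M ->
  Wp (Wneg b g) n = Wneg (b - 1) g n.
Proof.
  intros Hb HM. unfold Wp.
  set (U := Csum (fun i => Cmul (RtoC (kC b i)) (g (n + i)%nat))).
  set (V := Csum (fun i => Cmul (RtoC (kC b i)) (g (S n + i)%nat))).
  set (Z := Csum (fun i => Cmul (RtoC (kC (b - 1) i)) (g (n + i)%nat))).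
  assert (Hid : forall N, U (S N) = Cadd (Z (S N)) (V N)).
  { induction N.
    - unfold U, V, Z; cbn [Csum]. rewrite (kC_pascal b 0).
      replace (n + 1)%nat with (S n + 0)%nat by lia. rewrite Nat.add_0_r. simpl kC. Csolve.
    - unfold U, V, Z in *. change (Csum ?f (S (S N))) with (Cadd (Csum f (S N)) (f (S (S N)))).
      rewrite IHN. change (Csum ?f (S N)) with (Cadd (Csum f N) (f (S N))) at 3.
      rewrite (kC_pascal b (S N)).
      replace (n + S (S N))%nat with (S n + S N)%nat by lia. Csolve. }
  symmetry. apply Cseries_eq. fold Z. apply Cconv_shift.
  apply Cconv_ext with (fun N => Csub (U (S N)) (V N)).
  { intros N. rewrite Hid. Csolve. }
  apply Cconv_sub; [apply -> Cconv_shift|]; apply Wneg_cv with M; auto.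
Qed.

Lemma iter_Wp_Wneg b g M j n : b <= 1 -> sum_Cmod_le g M ->
  Nat.iter j Wp (Wneg b g) n = Wneg (b - INR j) g n.
Proof.
  intros Hb HM. revert n. induction j; intros n.
  - simpl. rewrite Rminus_0_r. reflexivity.
  - change (Nat.iter (S j) Wp (Wneg b g) n) with (Wp (Nat.iter j Wp (Wneg b g)) n).
    rewrite S_INR. replace (b - (INR j + 1)) with (b - INR j - 1) by ring.
    rewrite <- (Wp_Wneg _ _ M) by (auto; pose proof (pos_INR j); lra).
    unfold Wp. rewrite !IHj. reflexivity.
Qed.

Lemma mfrac_bounds A : 0 < A -> A <= INR (mfrac A) <= A + 1.
Proof.
  intros HA. unfold mfrac. destruct (archimed A) as [H1 H2].
  assert (Hz : (0 <= up A)%Z) by (apply le_IZR; lra).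
  rewrite INR_IZR_INZ, Z2Nat.id by auto. lra.
Qed.

(* W_+^{-(m-A)} has order m - A and each of the m differences lowers it by 1. *)
Lemma Walpha_Wneg A a M n : 0 < A -> sum_Cmod_le a M -> Walpha A a n = Wneg (- A) a n.
Proof.
  intros HA HM. unfold Walpha. pose proof (mfrac_bounds A HA).
  rewrite (iter_Wp_Wneg _ _ M) by (auto; lra).
  f_equal. ring.
Qed.

Definition sum_kC_Cmod_le (b : R) (g : nat -> Cplx) (S : R) : Prop :=
  forall N, sum_f_R0 (fun m => kC b m * Cmod (g m)) N <= S.

Lemma sum_Cmod_le_of_kC b g S : 1 <= b -> sum_kC_Cmod_le b g S -> sum_Cmod_le g S.
Proof.
  intros Hb H N. eapply Rle_trans; [|apply H]. apply sum_Rle. intros m _.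
  pose proof (kC_ge_1 b m Hb). pose proof (Cmod_ge0 (g m)). nra.
Qed.

(* Exchange the two sums, using that k^{A+1} is nondecreasing. *)
Lemma sum_kC_Cmod_Wneg_le A g S B : 0 < A ->
  (forall n, sum_f_R0 (fun i => Rabs (kC (- A) i)) n <= B) ->
  sum_kC_Cmod_le (A + 1) g S -> sum_kC_Cmod_le (A + 1) (Wneg (- A) g) (B * S).
Proof.
  intros HA HB HS N.
  assert (HA1 : 1 <= A + 1) by lra.
  assert (HS0 : 0 <= S).
  { eapply Rle_trans; [|apply (HS O)]. simpl.
    pose proof (Cmod_ge0 (g O)). lra. }
  set (Q := fun J n => Cmod (Csum (fun i => Cmul (RtoC (kC (- A) i)) (g (n + i)%nat)) J)).
  apply (Un_cv_ub (fun J => sum_f_R0 (fun n => kC (A + 1) n * Q J n) N)).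
  { apply Un_cv_sum_f_R0. intros n _. apply Un_cv_scal_l. apply Cconv_Cmod.
    apply (Wneg_cv _ _ S); [lra | apply sum_Cmod_le_of_kC with (A + 1); auto]. }
  intros J.
  apply Rle_trans with (sum_f_R0 (fun n => sum_f_R0 (fun i => Rabs (kC (- A) i) *
                           (kC (A + 1) (n + i) * Cmod (g (n + i)%nat))) J) N).
  { apply sum_Rle. intros n _. unfold Q.
    eapply Rle_trans.
    { apply Rmult_le_compat_l; [left; apply kC_pos; lra | apply Cmod_Csum_le]. }
    rewrite scal_sum. apply sum_Rle. intros i _. rewrite Cmod_mul, Cmod_RtoC.
    pose proof (kC_mono (A + 1) n (n + i) HA1 ltac:(lia)).
    pose proof (Rabs_pos (kC (- A) i)). pose proof (Cmod_ge0 (g (n + i)%nat)).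
    pose proof (kC_pos (A + 1) n ltac:(lra)).
    assert (0 <= Rabs (kC (- A) i) * Cmod (g (n + i)%nat)) by (apply Rmult_le_pos; auto).
    nra. }
  rewrite sum_f_R0_exchange.
  apply Rle_trans with (sum_f_R0 (fun i => Rabs (kC (- A) i) * S) J).
  { apply sum_Rle. intros i _. rewrite sum_f_R0_scal_l.
    apply Rmult_le_compat_l; [apply Rabs_pos|].
    eapply Rle_trans; [apply (sum_f_R0_shift_le (fun m => kC (A + 1) m * Cmod (g m)) N i)|].
    - intros; apply Rmult_le_pos; [left; apply kC_pos; lra | apply Cmod_ge0].
    - apply HS. }
  rewrite <- scal_sum, Rmult_comm. apply Rmult_le_compat_r; auto.
Qed.

(** * Banach spaces and bounded operators *)

Section Banach.
Context {X : CBanach}.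
Local Notation "x +v y" := (cb_add X x y) (at level 50, left associativity).
Local Notation vz := (cb_zero X).
Local Notation nrm := (cb_norm X).
Local Notation sc := (cb_scal X).
Local Notation vop := (cb_opp X).

Lemma cb_add_0_l x : vz +v x = x.
Proof. rewrite cb_add_comm. apply cb_add_zero. Qed.

Lemma cb_add_cancel_l x y z : x +v y = x +v z -> y = z.
Proof.
  intros H. rewrite <- (cb_add_0_l y), <- (cb_add_0_l z), <- (cb_add_opp X x).
  rewrite (cb_add_comm X x (vop x)), <- !cb_add_assoc, H. reflexivity.
Qed.

Lemma cb_add_ACA (a b c d : X) : (a +v b) +v (c +v d) = (a +v c) +v (b +v d).
Proof. rewrite <- !cb_add_assoc. f_equal. rewrite !cb_add_assoc. f_equal. apply cb_add_comm. Qed.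

Lemma cb_scal_C0 x : sc C0 x = vz.
Proof.
  apply (cb_add_cancel_l (sc C0 x)). rewrite cb_add_zero, <- cb_scal_adds.
  f_equal. Csolve.
Qed.

Lemma cb_scal_zero a : sc a vz = vz.
Proof.
  rewrite <- (cb_scal_C0 vz) at 1. rewrite cb_scal_assoc.
  replace (Cmul a C0) with C0 by Csolve. apply cb_scal_C0.
Qed.

Lemma cb_opp_scal x : vop x = sc (RtoC (-1)) x.
Proof.
  apply (cb_add_cancel_l x). rewrite cb_add_opp. rewrite <- (cb_scal_one X x) at 1.
  rewrite <- cb_scal_adds, <- (cb_scal_C0 x). f_equal. Csolve.
Qed.

Lemma cb_opp_add x y : vop (x +v y) = vop x +v vop y.
Proof. rewrite !cb_opp_scal. apply cb_scal_addv. Qed.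

Lemma cb_opp_opp x : vop (vop x) = x.
Proof.
  rewrite !cb_opp_scal, cb_scal_assoc. rewrite <- (cb_scal_one X x) at 2. f_equal. Csolve.
Qed.

Lemma cb_norm_zero : nrm vz = 0.
Proof. rewrite <- (cb_scal_C0 vz), cb_norm_scal, Cmod_C0. ring. Qed.

Lemma cb_norm_scal_RtoC r x : nrm (sc (RtoC r) x) = Rabs r * nrm x.
Proof. rewrite cb_norm_scal, Cmod_RtoC. reflexivity. Qed.

Lemma cb_norm_opp x : nrm (vop x) = nrm x.
Proof.
  rewrite cb_opp_scal, cb_norm_scal_RtoC.
  replace (Rabs (-1)) with 1 by (rewrite Rabs_left; lra). ring.
Qed.

Lemma vsub_norm_sym x y : nrm (vsub x y) = nrm (vsub y x).
Proof. unfold vsub. rewrite <- cb_norm_opp, cb_opp_add, cb_opp_opp, cb_add_comm. reflexivity. Qed.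

Lemma vsub_triangle x y z : nrm (vsub x z) <= nrm (vsub x y) + nrm (vsub y z).
Proof.
  replace (vsub x z) with (vsub x y +v vsub y z); [apply cb_norm_triangle|].
  unfold vsub. rewrite <- cb_add_assoc. f_equal.
  rewrite cb_add_assoc, (cb_add_comm X (vop y) y), cb_add_opp, cb_add_0_l. reflexivity.
Qed.

Lemma vsub_add x1 x2 y1 y2 : vsub (x1 +v x2) (y1 +v y2) = vsub x1 y1 +v vsub x2 y2.
Proof. unfold vsub. rewrite cb_opp_add. apply cb_add_ACA. Qed.

Lemma vsub_scal a x y : vsub (sc a x) (sc a y) = sc a (vsub x y).
Proof.
  unfold vsub. rewrite cb_scal_addv. f_equal.
  rewrite !cb_opp_scal, !cb_scal_assoc. f_equal. Csolve.
Qed.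

Lemma vsub_zero x : vsub x vz = x.
Proof. unfold vsub. rewrite cb_opp_scal, cb_scal_zero. apply cb_add_zero. Qed.

Lemma vsub_addK u w : vsub (u +v w) u = w.
Proof.
  unfold vsub. rewrite (cb_add_comm X u w), <- cb_add_assoc, cb_add_opp. apply cb_add_zero.
Qed.

Fixpoint vsum (f : nat -> X) (n : nat) : X :=
  match n with O => f O | S p => vsum f p +v f (S p) end.

Lemma vsum_S f n : vsum f (S n) = vsum f n +v f (S n).
Proof. reflexivity. Qed.

Lemma vsum_ext f g n : (forall i, (i <= n)%nat -> f i = g i) -> vsum f n = vsum g n.
Proof.
  induction n; intros H; simpl; [apply H; lia|].
  rewrite IHn by (intros; apply H; lia). rewrite H by lia. reflexivity.
Qed.

Lemma vsum_add f g n : vsum (fun i => f i +v g i) n = vsum f n +v vsum g n.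
Proof. induction n; simpl; [reflexivity | rewrite IHn; apply cb_add_ACA]. Qed.

Lemma vsum_scal a f n : sc a (vsum f n) = vsum (fun i => sc a (f i)) n.
Proof. induction n; simpl; [reflexivity | rewrite cb_scal_addv, IHn; reflexivity]. Qed.

Lemma vsum_scal_l (c : nat -> Cplx) v n : vsum (fun i => sc (c i) v) n = sc (Csum c n) v.
Proof. induction n; simpl; [reflexivity | rewrite IHn, cb_scal_adds; reflexivity]. Qed.

Lemma vsum_norm_le f n : nrm (vsum f n) <= sum_f_R0 (fun i => nrm (f i)) n.
Proof. induction n; simpl; [lra|]. pose proof (cb_norm_triangle X (vsum f n) (f (S n))). lra. Qed.

Lemma vsum_zero_after f M n :
  (M <= n)%nat -> (forall i, (M < i)%nat -> f i = vz) -> vsum f n = vsum f M.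
Proof.
  intros Hn H; induction Hn; [reflexivity | simpl; rewrite IHHn, H by lia; apply cb_add_zero].
Qed.

Lemma vsum_zero f n : (forall i, (i <= n)%nat -> f i = vz) -> vsum f n = vz.
Proof.
  induction n; intros H; simpl; [apply H; lia|].
  rewrite IHn, H by (intros; try apply H; lia). apply cb_add_zero.
Qed.

Lemma vsum_triangle (f : nat -> nat -> X) n :
  vsum (fun m => vsum (fun j => f m j) m) n =
  vsum (fun j => vsum (fun l => f (j + l)%nat j) (n - j)) n.
Proof.
  induction n; [reflexivity|].
  rewrite vsum_S, IHn, vsum_S, (vsum_S (fun j => vsum _ (S n - j))), Nat.sub_diag.
  simpl (vsum _ 0). rewrite Nat.add_0_r.
  rewrite (vsum_ext (fun j => vsum (fun l => f (j + l)%nat j) (S n - j))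
                     (fun j => vsum (fun l => f (j + l)%nat j) (n - j) +v f (S n) j) n).
  - rewrite vsum_add. rewrite <- !cb_add_assoc. reflexivity.
  - intros i Hi. replace (S n - i)%nat with (S (n - i)) by lia.
    simpl. do 3 f_equal. lia.
Qed.

Definition vconv (u : nat -> X) (l : X) : Prop :=
  forall eps, eps > 0 -> exists N, forall n, (n >= N)%nat -> nrm (vsub (u n) l) < eps.

Lemma vconv_unique u l1 l2 : vconv u l1 -> vconv u l2 -> l1 = l2.
Proof.
  intros H1 H2. assert (Hd : nrm (vsub l1 l2) = 0).
  { destruct (Rle_lt_or_eq_dec 0 _ (cb_norm_nonneg X (vsub l1 l2))) as [E|E]; auto. exfalso.
    set (e := nrm (vsub l1 l2)) in *.
    destruct (H1 (e / 2) ltac:(lra)) as [N1 HN1]. destruct (H2 (e / 2) ltac:(lra)) as [N2 HN2].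
    specialize (HN1 (N1 + N2)%nat ltac:(lia)). specialize (HN2 (N1 + N2)%nat ltac:(lia)).
    pose proof (vsub_triangle l1 (u (N1 + N2)%nat) l2) as Ht.
    rewrite (vsub_norm_sym l1 (u _)) in Ht. fold e in Ht. lra. }
  apply cb_norm_eq0 in Hd. apply (cb_add_cancel_l (vop l2)).
  rewrite (cb_add_comm X (vop l2) l2), cb_add_opp, cb_add_comm. exact Hd.
Qed.

Lemma vconv_add u v l1 l2 : vconv u l1 -> vconv v l2 -> vconv (fun n => u n +v v n) (l1 +v l2).
Proof.
  intros H1 H2 e He. destruct (H1 (e / 2) ltac:(lra)) as [N1 HN1].
  destruct (H2 (e / 2) ltac:(lra)) as [N2 HN2].
  exists (N1 + N2)%nat. intros n Hn. rewrite vsub_add.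
  pose proof (cb_norm_triangle X (vsub (u n) l1) (vsub (v n) l2)).
  specialize (HN1 n ltac:(lia)). specialize (HN2 n ltac:(lia)). lra.
Qed.

Lemma vconv_scal a u l : vconv u l -> vconv (fun n => sc a (u n)) (sc a l).
Proof.
  intros H e He. pose proof (Cmod_ge0 a).
  destruct (H (e / (Cmod a + 1))) as [N HN]; [apply Rdiv_lt_0_compat; lra|].
  exists N. intros n Hn. rewrite vsub_scal, cb_norm_scal. specialize (HN n Hn).
  pose proof (cb_norm_nonneg X (vsub (u n) l)).
  apply (Rmult_lt_compat_l (Cmod a + 1)) in HN; [|lra].
  replace ((Cmod a + 1) * (e / (Cmod a + 1))) with e in HN by (field; lra). nra.
Qed.

Lemma vconv_dist_le u l x b N0 : vconv u l ->
  (forall n, (N0 <= n)%nat -> nrm (vsub (u n) x) <= b) -> nrm (vsub l x) <= b.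
Proof.
  intros H Hb. destruct (Rle_or_lt (nrm (vsub l x)) b) as [h|h]; auto. exfalso.
  destruct (H (nrm (vsub l x) - b) ltac:(lra)) as [N HN]. specialize (HN (N + N0)%nat ltac:(lia)).
  pose proof (vsub_triangle l (u (N + N0)%nat) x) as Ht. rewrite (vsub_norm_sym l (u _)) in Ht.
  specialize (Hb (N + N0)%nat ltac:(lia)). lra.
Qed.

Lemma additive_zero (U : X -> X) : (forall x y, U (x +v y) = U x +v U y) -> U vz = vz.
Proof. intros H. apply (cb_add_cancel_l (U vz)). rewrite <- H, !cb_add_zero. reflexivity. Qed.

Lemma opnorm_le (U : X -> X) M : 0 <= M -> (forall x, nrm (U x) <= M * nrm x) -> opnorm U <= M.
Proof.
  intros HM H. unfold opnorm. destruct excluded_middle_informative as [h|h]; [|lra].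
  destruct constructive_indefinite_description as [l [Hl1 Hl2]]. simpl.
  apply Hl2. intros r [x [Hx ->]]. specialize (H x). pose proof (cb_norm_nonneg X x). nra.
Qed.

Lemma opnorm_ge0 (U : X -> X) : is_bounded_op U -> 0 <= opnorm U.
Proof.
  intros [Hadd _]. unfold opnorm. destruct excluded_middle_informative as [h|h]; [|lra].
  destruct constructive_indefinite_description as [l [Hl1 Hl2]]. simpl.
  apply Hl1. exists vz. rewrite (additive_zero U Hadd), cb_norm_zero. split; [lra | reflexivity].
Qed.

(* For x <> 0 apply the supremum to x / ||x||. *)
Lemma opnorm_bound (U : X -> X) : is_bounded_op U -> forall x, nrm (U x) <= opnorm U * nrm x.
Proof.
  intros [Hadd [Hsc [M HM]]].
  set (E := fun r => exists x : X, nrm x <= 1 /\ r = nrm (U x)).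
  assert (Hex : exists l, is_lub E l).
  { destruct (completeness E) as [l Hl]; [| |exists l; auto].
    - exists (Rabs M). intros r [x [Hx ->]]. specialize (HM x). pose proof (cb_norm_nonneg X x).
      pose proof (Rle_abs M). pose proof (Rabs_pos M). nra.
    - exists (nrm (U vz)), vz. rewrite cb_norm_zero. split; [lra | reflexivity]. }
  assert (Hlub : forall l, is_lub E l -> forall x, nrm (U x) <= l * nrm x).
  { intros l [Hl1 _] x.
    destruct (Rle_lt_or_eq_dec 0 _ (cb_norm_nonneg X x)) as [Hp|Hp].
    - assert (Hi : 0 < / nrm x) by (apply Rinv_0_lt_compat; lra).
      set (y := sc (RtoC (/ nrm x)) x).
      assert (Hy : nrm y = 1).
      { unfold y. rewrite cb_norm_scal_RtoC, Rabs_right by lra. field; lra. }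
      assert (Hl : nrm (U y) <= l) by (apply Hl1; exists y; split; [lra | reflexivity]).
      unfold y in Hl. rewrite Hsc, cb_norm_scal_RtoC, Rabs_right in Hl by lra.
      apply (Rmult_le_compat_l (nrm x)) in Hl; [|lra].
      rewrite <- Rmult_assoc, Rinv_r, Rmult_1_l in Hl by lra. lra.
    - symmetry in Hp. apply cb_norm_eq0 in Hp. subst x.
      rewrite (additive_zero U Hadd), cb_norm_zero. lra. }
  intros x. unfold opnorm. destruct excluded_middle_informative as [h|h].
  - destruct constructive_indefinite_description as [l Hl]. simpl. apply Hlub; auto.
  - exfalso. apply h. exact Hex.
Qed.

Lemma is_bounded_op_id : is_bounded_op (fun x : X => x).
Proof. split; [|split]; auto. exists 1. intros; lra. Qed.

Lemma is_bounded_op_comp (U V : X -> X) :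
  is_bounded_op U -> is_bounded_op V -> is_bounded_op (fun x => U (V x)).
Proof.
  intros [Ua [Us [MU HU]]] [Va [Vs [MV HV]]]. split; [|split].
  - intros; rewrite Va, Ua; reflexivity.
  - intros; rewrite Vs, Us; reflexivity.
  - exists (Rabs MU * Rabs MV). intros x.
    pose proof (HU (V x)). pose proof (HV x).
    pose proof (cb_norm_nonneg X x). pose proof (cb_norm_nonneg X (V x)).
    pose proof (Rle_abs MU). pose proof (Rle_abs MV). pose proof (Rabs_pos MU).
    assert (MU * nrm (V x) <= Rabs MU * nrm (V x)) by nra.
    assert (nrm (V x) <= Rabs MV * nrm x) by nra.
    assert (Rabs MU * nrm (V x) <= Rabs MU * (Rabs MV * nrm x))
      by (apply Rmult_le_compat_l; auto).
    lra.
Qed.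

Lemma is_bounded_op_add (U V : X -> X) :
  is_bounded_op U -> is_bounded_op V -> is_bounded_op (fun x => U x +v V x).
Proof.
  intros [Ua [Us [MU HU]]] [Va [Vs [MV HV]]]. split; [|split].
  - intros; rewrite Va, Ua. apply cb_add_ACA.
  - intros; rewrite Vs, Us, cb_scal_addv; reflexivity.
  - exists (Rabs MU + Rabs MV). intros x. eapply Rle_trans; [apply cb_norm_triangle|].
    pose proof (HU x). pose proof (HV x). pose proof (cb_norm_nonneg X x).
    pose proof (Rle_abs MU). pose proof (Rle_abs MV). nra.
Qed.

Lemma is_bounded_op_scal a (U : X -> X) : is_bounded_op U -> is_bounded_op (opscal a U).
Proof.
  intros [Ua [Us [MU HU]]]. unfold opscal. split; [|split].
  - intros; rewrite Ua, cb_scal_addv; reflexivity.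
  - intros; rewrite Us, !cb_scal_assoc. f_equal. Csolve.
  - exists (Cmod a * Rabs MU). intros x. rewrite cb_norm_scal.
    pose proof (HU x). pose proof (cb_norm_nonneg X x). pose proof (Cmod_ge0 a).
    pose proof (Rle_abs MU). assert (nrm (U x) <= Rabs MU * nrm x) by nra. nra.
Qed.

Lemma is_bounded_op_sub (U V : X -> X) :
  is_bounded_op U -> is_bounded_op V -> is_bounded_op (opsub U V).
Proof.
  intros HU HV. unfold opsub, vsub. apply is_bounded_op_add; auto.
  destruct HV as [Va [Vs [M HM]]]. split; [|split].
  - intros; rewrite Va, cb_opp_add; reflexivity.
  - intros; rewrite Vs, !cb_opp_scal, !cb_scal_assoc. f_equal. Csolve.
  - exists M. intros; rewrite cb_norm_opp; auto.
Qed.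

Lemma is_bounded_op_oppow (T : X -> X) j : is_bounded_op T -> is_bounded_op (oppow T j).
Proof.
  intros H. induction j; [apply is_bounded_op_id|].
  change (oppow T (S j)) with (fun x => T (oppow T j x)). apply is_bounded_op_comp; auto.
Qed.

Lemma is_bounded_op_opsum (F : nat -> X -> X) n :
  (forall i, is_bounded_op (F i)) -> is_bounded_op (opsum F n).
Proof. intros H. induction n; [apply H | simpl; apply is_bounded_op_add; auto]. Qed.

Lemma opsum_apply (F : nat -> X -> X) n x : opsum F n x = vsum (fun i => F i x) n.
Proof. induction n; simpl; [reflexivity | rewrite IHn; reflexivity]. Qed.

End Banach.

(** * Cesaro sums and the growth of T^n *)

Section Cesaro.
Context {X : CBanach}.
Local Notation "x +v y" := (cb_add X x y) (at level 50, left associativity).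
Local Notation sc := (cb_scal X).
Variable A : R.

Definition cesaro (v : nat -> X) (m : nat) : X :=
  vsum (fun j => sc (RtoC (kC A (m - j))) (v j)) m.

(* Convolving with k^{-A} inverts the Cesaro sum: k^{-A} * k^A = k^0 = delta. *)
Lemma cesaro_inv (v : nat -> X) n :
  vsum (fun m => sc (RtoC (kC (- A) (n - m))) (cesaro v m)) n = v n.
Proof.
  unfold cesaro.
  rewrite (vsum_ext _
    (fun m => vsum (fun j => sc (RtoC (kC (- A) (n - m) * kC A (m - j))) (v j)) m) n).
  2: { intros m _. rewrite vsum_scal. apply vsum_ext. intros j _.
       rewrite cb_scal_assoc. f_equal. Csolve. }
  rewrite (vsum_triangle (fun m j => sc (RtoC (kC (- A) (n - m) * kC A (m - j))) (v j)) n).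
  rewrite (vsum_ext _ (fun j => sc (RtoC (kC 0 (n - j))) (v j)) n).
  2: { intros j Hj. rewrite vsum_scal_l, Csum_RtoC. do 2 f_equal.
       replace 0 with (A + - A) by ring. rewrite <- (kC_convolution A (- A) (n - j)).
       apply sum_eq. intros i Hi. replace (n - (j + i))%nat with (n - j - i)%nat by lia.
       replace (j + i - j)%nat with i by lia. ring. }
  assert (Hdiag : sc (RtoC (kC 0 (n - n))) (v n) = v n).
  { rewrite Nat.sub_diag. apply cb_scal_one. }
  destruct n; [exact Hdiag|].
  rewrite vsum_S, Hdiag, vsum_zero; [apply cb_add_0_l|].
  intros i Hi. replace (S n - i)%nat with (S (n - i)) by lia.
  rewrite kC_0_S. apply cb_scal_C0.
Qed.

(* Summation by parts; in the induction on M, cesaro_inv expands the new term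
   a(M+1) v(M+1). *)
Lemma cesaro_summation_by_parts (a : nat -> Cplx) (v : nat -> X) M :
  vsum (fun m => sc (Csum (fun l => Cmul (RtoC (kC (- A) l)) (a (m + l)%nat)) (M - m))
                    (cesaro v m)) M =
  vsum (fun j => sc (a j) (v j)) M.
Proof.
  induction M.
  - unfold cesaro. simpl. rewrite cb_scal_assoc. f_equal. Csolve.
  - rewrite (vsum_S (fun j => sc (a j) (v j))), <- IHM, <- (cesaro_inv v (S M)), vsum_scal.
    rewrite (vsum_ext _ (fun m => (if (m <=? M)%nat then
           sc (Csum (fun l => Cmul (RtoC (kC (- A) l)) (a (m + l)%nat)) (M - m)) (cesaro v m)
           else cb_zero X)
           +v sc (a (S M)) (sc (RtoC (kC (- A) (S M - m))) (cesaro v m))) (S M)).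
    + rewrite vsum_add, (vsum_S _ M).
      replace (S M <=? M)%nat with false by (symmetry; apply Nat.leb_gt; lia).
      rewrite cb_add_zero. f_equal. apply vsum_ext. intros i Hi.
      destruct (Nat.leb_spec i M); [reflexivity | lia].
    + intros m Hm. rewrite cb_scal_assoc. destruct (Nat.leb_spec m M).
      * replace (S M - m)%nat with (S (M - m)) by lia. simpl Csum. rewrite cb_scal_adds.
        f_equal. f_equal. replace (m + S (M - m))%nat with (S M) by lia. Csolve.
      * replace m with (S M) by lia. rewrite Nat.sub_diag. simpl Csum. rewrite <- plus_n_O.
        rewrite cb_add_0_l. f_equal. Csolve.
Qed.

End Cesaro.

Lemma DeltaT_apply {X : CBanach} A (T : X -> X) m x :
  DeltaT A T m x = cesaro A (fun j => oppow T j x) m.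
Proof. unfold DeltaT. rewrite opsum_apply. reflexivity. Qed.

Lemma is_bounded_op_DeltaT {X : CBanach} A (T : X -> X) n :
  is_bounded_op T -> is_bounded_op (DeltaT A T n).
Proof.
  intros HT. apply is_bounded_op_opsum. intros i.
  apply is_bounded_op_scal, is_bounded_op_oppow, HT.
Qed.

Section CesaroBounded.
Context {X : CBanach}.
Local Notation nrm := (cb_norm X).
Variable A : R.
Variable T : X -> X.
Hypothesis HA : 0 < A.
Hypothesis HT : is_bounded_op T.
Variable K : R.
Hypothesis HK : forall n, opnorm (MT A T n) <= K.

Lemma Ca_bound_ge0 : 0 <= K.
Proof.
  pose proof (opnorm_ge0 _ (is_bounded_op_scal (RtoC (/ kC (A + 1) 0)) _
    (is_bounded_op_DeltaT A T O HT))).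
  pose proof (HK O). unfold MT in *. lra.
Qed.

Lemma DeltaT_norm_le n x : nrm (DeltaT A T n x) <= K * kC (A + 1) n * nrm x.
Proof.
  pose proof (kC_pos (A + 1) n ltac:(lra)) as Hk.
  assert (HM : nrm (MT A T n x) <= K * nrm x).
  { eapply Rle_trans.
    - apply opnorm_bound, is_bounded_op_scal, is_bounded_op_DeltaT, HT.
    - apply Rmult_le_compat_r; [apply cb_norm_nonneg | apply HK]. }
  unfold MT, opscal in HM. rewrite cb_norm_scal_RtoC, Rabs_right in HM
    by (apply Rle_ge; left; apply Rinv_0_lt_compat; lra).
  apply (Rmult_le_compat_l (kC (A + 1) n)) in HM; [|lra].
  rewrite <- Rmult_assoc, Rinv_r, Rmult_1_l in HM by lra. lra.
Qed.

Variable B : R.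
Hypothesis HB : forall n, sum_f_R0 (fun i => Rabs (kC (- A) i)) n <= B.

(* T^n x = sum_m k^{-A}(n-m) Delta^{-A}T(m) x, and k^{A+1} is nondecreasing. *)
Lemma oppow_norm_le n x : nrm (oppow T n x) <= K * B * kC (A + 1) n * nrm x.
Proof.
  rewrite <- (cesaro_inv A (fun j => oppow T j x) n).
  eapply Rle_trans; [apply vsum_norm_le|].
  pose proof Ca_bound_ge0. pose proof (cb_norm_nonneg X x).
  pose proof (kC_pos (A + 1) n ltac:(lra)).
  assert (Hc : 0 <= K * kC (A + 1) n * nrm x) by (apply Rmult_le_pos; [apply Rmult_le_pos|]; lra).
  apply Rle_trans with (sum_f_R0 (fun m => Rabs (kC (- A) (n - m)) * (K * kC (A + 1) n * nrm x)) n).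
  { apply sum_Rle. intros m Hm. rewrite cb_norm_scal_RtoC.
    apply Rmult_le_compat_l; [apply Rabs_pos|].
    rewrite <- DeltaT_apply. eapply Rle_trans; [apply DeltaT_norm_le|].
    pose proof (kC_mono (A + 1) m n ltac:(lra) Hm).
    apply Rmult_le_compat_r; [auto | apply Rmult_le_compat_l; auto]. }
  rewrite <- scal_sum, (sum_f_R0_rev (fun i => Rabs (kC (- A) i)) n).
  specialize (HB n). rewrite (Rmult_comm _ (sum_f_R0 _ _)).
  replace (K * B * kC (A + 1) n * nrm x) with (B * (K * kC (A + 1) n * nrm x)) by ring.
  apply Rmult_le_compat_r; auto.
Qed.

End CesaroBounded.

(** * The two operator series *)

Lemma Rsummable_bounded (u : nat -> R) M :
  (forall n, 0 <= u n) -> (forall N, sum_f_R0 u N <= M) -> Rsummable u.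
Proof.
  intros Hu HM. destruct (growing_cv (sum_f_R0 u)) as [l Hl].
  - intros n. rewrite tech5. specialize (Hu (S n)). lra.
  - exists M. intros y [n ->]. apply HM.
  - exists l. exact Hl.
Qed.

(* k^{A+1}(j) <= e^A j^A for j >= 1. *)
Lemma Rsummable_kC_Cmod A a : 0 < A ->
  Rsummable (fun j => npow j A * Cmod (a j)) ->
  Rsummable (fun j => kC (A + 1) j * Cmod (a j)).
Proof.
  intros HA [L HL].
  assert (Hw : forall j, 0 <= npow j A * Cmod (a j)).
  { intros [|j]; apply Rmult_le_pos; try apply Cmod_ge0; simpl; [lra|].
    unfold Rpower. left; apply exp_pos. }
  apply (Rsummable_bounded _ (Cmod (a O) + exp A * L)).
  { intros j. apply Rmult_le_pos; [left; apply kC_pos; lra | apply Cmod_ge0]. }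
  intros N. rewrite (sum_eq _ (fun j => (if (j =? 0)%nat then Cmod (a O) else 0) +
                                        (if (j =? 0)%nat then 0 else kC (A + 1) j * Cmod (a j)))).
  2: { intros [|j] _; simpl; ring. }
  rewrite plus_sum.
  rewrite (sum_f_R0_zero_after _ O N) by (lia || (intros [|i] Hi; [lia | reflexivity])).
  apply Rplus_le_compat; [simpl; lra|].
  apply Rle_trans with (exp A * sum_f_R0 (fun j => npow j A * Cmod (a j)) N).
  - rewrite <- sum_f_R0_scal_l. apply sum_Rle. intros [|j] _; simpl Nat.eqb; cbv iota.
    + apply Rmult_le_pos; [left; apply exp_pos | apply Hw].
    + rewrite <- Rmult_assoc.
      apply Rmult_le_compat_r; [apply Cmod_ge0 | apply kC_le_exp_npow; auto].
  - apply Rmult_le_compat_l; [left; apply exp_pos | apply sum_incr; auto].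
Qed.

Definition trunc (M : nat) (a : nat -> Cplx) j := if (j <=? M)%nat then a j else C0.
Definition drop (M : nat) (a : nat -> Cplx) j := if (j <=? M)%nat then C0 else a j.

Lemma trunc_add_drop M a j : a j = Cadd (trunc M a j) (drop M a j).
Proof. unfold trunc, drop. destruct (j <=? M)%nat; Csolve. Qed.

Lemma Cmod_trunc_le M a j : Cmod (trunc M a j) <= Cmod (a j).
Proof. unfold trunc. destruct (j <=? M)%nat; [lra | rewrite Cmod_C0; apply Cmod_ge0]. Qed.

Lemma Cmod_drop_le M a j : Cmod (drop M a j) <= Cmod (a j).
Proof. unfold drop. destruct (j <=? M)%nat; [rewrite Cmod_C0; apply Cmod_ge0 | lra]. Qed.

Section Coefficients.
Variable A : R.
Hypothesis HA : 0 < A.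
Variable a : nat -> Cplx.
Variable L : R.
Hypothesis HL : Un_cv (sum_f_R0 (fun j => kC (A + 1) j * Cmod (a j))) L.

Definition tail_sum (M : nat) : R := L - sum_f_R0 (fun j => kC (A + 1) j * Cmod (a j)) M.

Lemma weight_ge0 j : 0 <= kC (A + 1) j * Cmod (a j).
Proof. apply Rmult_le_pos; [left; apply kC_pos; lra | apply Cmod_ge0]. Qed.

Lemma sum_kC_Cmod_le_a : sum_kC_Cmod_le (A + 1) a L.
Proof. intros N. apply sum_incr; [exact HL | apply weight_ge0]. Qed.

Lemma sum_Cmod_le_a : sum_Cmod_le a L.
Proof. apply (sum_Cmod_le_of_kC (A + 1)); [lra | apply sum_kC_Cmod_le_a]. Qed.

Lemma tail_sum_ge0 M : 0 <= tail_sum M.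
Proof. unfold tail_sum. pose proof (sum_kC_Cmod_le_a M). lra. Qed.

Lemma tail_sum_cv0 : Un_cv tail_sum 0.
Proof.
  intros e He. destruct (HL e He) as [N HN]. exists N. intros n Hn. specialize (HN n Hn).
  unfold Rdist, tail_sum in *. rewrite Rminus_0_r, <- Rabs_Ropp. rewrite Ropp_minus_distr. exact HN.
Qed.

Lemma sum_kC_Cmod_le_drop M : sum_kC_Cmod_le (A + 1) (drop M a) (tail_sum M).
Proof.
  intros N. unfold tail_sum.
  rewrite (sum_eq _ (fun m => if (m <=? M)%nat then 0 else kC (A + 1) m * Cmod (a m))).
  - apply sum_f_R0_after_le; [apply weight_ge0 | apply sum_kC_Cmod_le_a].
  - intros m _. unfold drop. destruct (m <=? M)%nat; [rewrite Cmod_C0; ring | reflexivity].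
Qed.

Lemma Rsummable_kC_Walpha : Rsummable (fun n => kC (A + 1) n * Cmod (Walpha A a n)).
Proof.
  destruct (sum_abs_kC_opp_bounded A HA) as [B HB].
  apply (Rsummable_bounded _ (B * L)).
  { intros n. apply Rmult_le_pos; [left; apply kC_pos; lra | apply Cmod_ge0]. }
  intros N. rewrite (sum_eq _ (fun n => kC (A + 1) n * Cmod (Wneg (- A) a n))).
  - apply (sum_kC_Cmod_Wneg_le A a L B HA HB sum_kC_Cmod_le_a).
  - intros n _. rewrite (Walpha_Wneg A a L n HA sum_Cmod_le_a). reflexivity.
Qed.

End Coefficients.

Section Series.
Context {X : CBanach}.
Local Notation "x +v y" := (cb_add X x y) (at level 50, left associativity).
Local Notation nrm := (cb_norm X).
Local Notation sc := (cb_scal X).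
Variable A : R.
Variable T : X -> X.
Hypothesis HA : 0 < A.
Hypothesis HT : is_bounded_op T.
Variable K : R.
Hypothesis HK : forall n, opnorm (MT A T n) <= K.
Variable B : R.
Hypothesis HB : forall n, sum_f_R0 (fun i => Rabs (kC (- A) i)) n <= B.

Lemma K_B_ge0 : 0 <= K * B.
Proof.
  apply Rmult_le_pos; [apply (Ca_bound_ge0 A T HT K HK)|].
  eapply Rle_trans; [|apply (HB O)]. apply Rabs_pos.
Qed.

Lemma vsum_oppow_norm_le g S N x : sum_kC_Cmod_le (A + 1) g S ->
  nrm (vsum (fun j => sc (g j) (oppow T j x)) N) <= K * B * S * nrm x.
Proof.
  intros Hg. eapply Rle_trans; [apply vsum_norm_le|].
  pose proof K_B_ge0. pose proof (cb_norm_nonneg X x).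
  apply Rle_trans with (sum_f_R0 (fun j => (K * B * nrm x) * (kC (A + 1) j * Cmod (g j))) N).
  - apply sum_Rle. intros j _. rewrite cb_norm_scal.
    pose proof (oppow_norm_le A T HA HT K HK B HB j x). pose proof (Cmod_ge0 (g j)).
    replace (K * B * nrm x * (kC (A + 1) j * Cmod (g j)))
      with (Cmod (g j) * (K * B * kC (A + 1) j * nrm x)) by ring.
    apply Rmult_le_compat_l; auto.
  - rewrite sum_f_R0_scal_l.
    replace (K * B * S * nrm x) with ((K * B * nrm x) * S) by ring.
    apply Rmult_le_compat_l; [apply Rmult_le_pos |]; auto.
Qed.

Lemma vsum_Wneg_DeltaT_norm_le g S N x : sum_kC_Cmod_le (A + 1) g S ->
  nrm (vsum (fun n => sc (Wneg (- A) g n) (DeltaT A T n x)) N) <= K * B * S * nrm x.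
Proof.
  intros Hg. eapply Rle_trans; [apply vsum_norm_le|].
  pose proof (Ca_bound_ge0 A T HT K HK). pose proof (cb_norm_nonneg X x).
  apply Rle_trans with (sum_f_R0 (fun n => (K * nrm x) * (kC (A + 1) n * Cmod (Wneg (- A) g n))) N).
  - apply sum_Rle. intros n _. rewrite cb_norm_scal.
    pose proof (DeltaT_norm_le A T HA HT K HK n x). pose proof (Cmod_ge0 (Wneg (- A) g n)).
    replace (K * nrm x * (kC (A + 1) n * Cmod (Wneg (- A) g n)))
      with (Cmod (Wneg (- A) g n) * (K * kC (A + 1) n * nrm x)) by ring.
    apply Rmult_le_compat_l; auto.
  - rewrite sum_f_R0_scal_l.
    replace (K * B * S * nrm x) with ((K * nrm x) * (B * S)) by ring.
    apply Rmult_le_compat_l; [apply Rmult_le_pos; auto|].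
    apply (sum_kC_Cmod_Wneg_le A g S B HA HB Hg).
Qed.

Variable a : nat -> Cplx.
Variable L : R.
Hypothesis HL : Un_cv (sum_f_R0 (fun j => kC (A + 1) j * Cmod (a j))) L.

Local Notation tail := (tail_sum A a L).

Definition psum (N : nat) (x : X) : X := vsum (fun j => sc (a j) (oppow T j x)) N.

Lemma psum_split M N x : (M <= N)%nat ->
  psum N x = psum M x +v vsum (fun j => sc (drop M a j) (oppow T j x)) N.
Proof.
  intros HMN. unfold psum.
  rewrite (vsum_ext _ (fun j => sc (trunc M a j) (oppow T j x) +v sc (drop M a j) (oppow T j x)) N)
    by (intros i _; rewrite <- cb_scal_adds, <- trunc_add_drop; reflexivity).
  rewrite vsum_add. f_equal.
  rewrite (vsum_zero_after _ M N HMN).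
  - apply vsum_ext. intros i Hi. unfold trunc. destruct (Nat.leb_spec i M); [reflexivity | lia].
  - intros i Hi. unfold trunc. destruct (Nat.leb_spec i M); [lia | apply cb_scal_C0].
Qed.

Lemma psum_dist_le M N x : (M <= N)%nat ->
  nrm (vsub (psum N x) (psum M x)) <= K * B * tail M * nrm x.
Proof.
  intros H. rewrite (psum_split M N x H), vsub_addK.
  apply vsum_oppow_norm_le, sum_kC_Cmod_le_drop; auto.
Qed.

Lemma psum_cv x : exists l, vconv (fun N => psum N x) l.
Proof.
  apply cb_complete. intros e He.
  set (c := 2 * K * B * nrm x + 1).
  assert (Hc : 0 < c).
  { pose proof K_B_ge0. pose proof (cb_norm_nonneg X x).
    assert (0 <= K * B * nrm x) by (apply Rmult_le_pos; lra). unfold c. lra. }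
  destruct (tail_sum_cv0 A a L HL (e / c) ltac:(apply Rdiv_lt_0_compat; auto)) as [M HM].
  specialize (HM M (le_n _)). unfold Rdist in HM. rewrite Rminus_0_r in HM.
  pose proof (tail_sum_ge0 A HA a L HL M). rewrite Rabs_right in HM by lra.
  exists M. intros m n Hm Hn.
  pose proof (vsub_triangle (psum m x) (psum M x) (psum n x)) as Ht.
  rewrite (vsub_norm_sym (psum M x)) in Ht.
  pose proof (psum_dist_le M m x Hm). pose proof (psum_dist_le M n x Hn).
  assert (Hb : 2 * (K * B * tail M * nrm x) < e).
  { replace (2 * (K * B * tail M * nrm x)) with (tail M * (c - 1)) by (unfold c; ring).
    apply (Rmult_lt_compat_r c) in HM; auto.
    unfold Rdiv in HM. rewrite Rmult_assoc, Rinv_l, Rmult_1_r in HM by lra. nra. }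
  change (cb_add X (psum m x) (cb_opp X (psum n x))) with (vsub (psum m x) (psum n x)). lra.
Qed.

Definition psum_lim (x : X) : X := proj1_sig (constructive_indefinite_description _ (psum_cv x)).

Lemma psum_lim_cv x : vconv (fun N => psum N x) (psum_lim x).
Proof. unfold psum_lim. destruct constructive_indefinite_description as [l Hl]. exact Hl. Qed.

Lemma psum_lim_dist_le M x : nrm (vsub (psum M x) (psum_lim x)) <= K * B * tail M * nrm x.
Proof.
  rewrite vsub_norm_sym. apply (vconv_dist_le _ _ _ _ M (psum_lim_cv x)).
  intros n Hn. apply psum_dist_le; auto.
Qed.

Lemma is_bounded_op_psum_lim : is_bounded_op psum_lim.
Proof.
  split; [|split].
  - intros x y. apply (vconv_unique (fun N => psum N (x +v y))); [apply psum_lim_cv|].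
    intros e He. destruct (vconv_add _ _ _ _ (psum_lim_cv x) (psum_lim_cv y) e He) as [N HN].
    exists N. intros n Hn. replace (psum n (x +v y)) with (psum n x +v psum n y); [apply HN; auto|].
    unfold psum. rewrite <- vsum_add. apply vsum_ext. intros i _.
    destruct (is_bounded_op_oppow T i HT) as [Ha _]. rewrite Ha. symmetry. apply cb_scal_addv.
  - intros c x. apply (vconv_unique (fun N => psum N (sc c x))); [apply psum_lim_cv|].
    intros e He. destruct (vconv_scal c _ _ (psum_lim_cv x) e He) as [N HN].
    exists N. intros n Hn. replace (psum n (sc c x)) with (sc c (psum n x)); [apply HN; auto|].
    unfold psum. rewrite vsum_scal. apply vsum_ext. intros i _.
    destruct (is_bounded_op_oppow T i HT) as [_ [Hs _]].
    rewrite Hs, !cb_scal_assoc. f_equal. Csolve.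
  - exists (K * B * tail O + Cmod (a O)). intros x.
    pose proof (psum_lim_dist_le O x) as Hd. rewrite vsub_norm_sym in Hd.
    pose proof (vsub_triangle (psum_lim x) (psum O x) (cb_zero X)) as Ht.
    rewrite !vsub_zero in Ht.
    assert (H0 : nrm (psum O x) = Cmod (a O) * nrm x) by apply cb_norm_scal.
    lra.
Qed.

Lemma opseries_conv_oppow : opseries_conv (fun j => opscal (a j) (oppow T j)) psum_lim.
Proof.
  apply (Un_cv_0_squeeze _ tail (K * B)); [|apply (tail_sum_cv0 A a L HL)].
  intros n. pose proof K_B_ge0. pose proof (tail_sum_ge0 A HA a L HL n). split.
  - apply opnorm_ge0, is_bounded_op_sub; [|apply is_bounded_op_psum_lim].
    apply is_bounded_op_opsum. intros i. apply is_bounded_op_scal, is_bounded_op_oppow, HT.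
  - apply opnorm_le; [apply Rmult_le_pos; auto|].
    intros x. unfold opsub. rewrite opsum_apply. apply psum_lim_dist_le.
Qed.

(* On the first N+1 terms, W_+^A of the truncation of a is a finite sum, and
   summation by parts against Delta^{-A}T gives back the partial sum of
   a(j) T^j; what remains involves only the dropped part of a. *)
Lemma theta_psum_split N x :
  vsum (fun n => sc (Walpha A a n) (DeltaT A T n x)) N =
  psum N x +v vsum (fun n => sc (Wneg (- A) (drop N a) n) (DeltaT A T n x)) N.
Proof.
  pose proof (sum_Cmod_le_a A HA a L HL) as Ha.
  assert (Htr : forall j, (N < j)%nat -> trunc N a j = C0).
  { intros j Hj. unfold trunc. destruct (Nat.leb_spec j N); [lia | reflexivity]. }
  rewrite (vsum_ext _ (fun n => sc (Wneg (- A) (trunc N a) n) (DeltaT A T n x) +v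
                                sc (Wneg (- A) (drop N a) n) (DeltaT A T n x)) N).
  2: { intros n _. rewrite <- cb_scal_adds, (Walpha_Wneg A a L n HA Ha).
       erewrite (Wneg_add _ _ _ _ L L); [reflexivity | lra | | | apply trunc_add_drop].
       - apply (sum_Cmod_le_mono _ a); [apply Cmod_trunc_le | exact Ha].
       - apply (sum_Cmod_le_mono _ a); [apply Cmod_drop_le | exact Ha]. }
  rewrite vsum_add. f_equal. unfold psum.
  rewrite <- (cesaro_summation_by_parts A a (fun j => oppow T j x) N).
  apply vsum_ext. intros n Hn. rewrite DeltaT_apply. f_equal.
  rewrite (Wneg_finite _ _ N n Hn Htr).
  apply Csum_ext. intros l Hl. unfold trunc.
  destruct (Nat.leb_spec (n + l) N); [reflexivity | lia].
Qed.

Lemma opseries_conv_theta :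
  opseries_conv (fun n => opscal (Walpha A a n) (DeltaT A T n)) psum_lim.
Proof.
  apply (Un_cv_0_squeeze _ tail (2 * (K * B))); [|apply (tail_sum_cv0 A a L HL)].
  intros N. pose proof K_B_ge0. pose proof (tail_sum_ge0 A HA a L HL N). split.
  - apply opnorm_ge0, is_bounded_op_sub; [|apply is_bounded_op_psum_lim].
    apply is_bounded_op_opsum. intros i. apply is_bounded_op_scal, is_bounded_op_DeltaT, HT.
  - apply opnorm_le; [apply Rmult_le_pos; [apply Rmult_le_pos|]; lra|].
    intros x. unfold opsub. rewrite opsum_apply. cbv beta. unfold opscal.
    rewrite theta_psum_split.
    pose proof (vsub_triangle (psum N x +v vsum (fun n => sc (Wneg (- A) (drop N a) n)
      (DeltaT A T n x)) N) (psum N x) (psum_lim x)) as Ht.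
    rewrite vsub_addK in Ht.
    pose proof (vsum_Wneg_DeltaT_norm_le _ _ N x (sum_kC_Cmod_le_drop A HA a L HL N)).
    pose proof (psum_lim_dist_le N x). lra.
Qed.

End Series.

Theorem mainTheorem11 (X : CBanach) (alpha : R) (T : X -> X)
  (Halpha : 0 < alpha) (HT : is_bounded_op T) (HCa : Ca_bounded alpha T) :
  (exists K N, forall j, (j >= N)%nat -> opnorm (oppow T j) <= K * npow j alpha) /\
  (forall a : nat -> Cplx,
     Rsummable (fun j => npow j alpha * Cmod (a j)) ->
     Rsummable (fun n => kC (alpha + 1) n * Cmod (Walpha alpha a n)) /\
     exists S : X -> X, is_bounded_op S /\
       opseries_conv (fun j => opscal (a j) (oppow T j)) S /\
       opseries_conv (fun n => opscal (Walpha alpha a n) (DeltaT alpha T n)) S).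
Proof.
  destruct HCa as [K HK].
  destruct (sum_abs_kC_opp_bounded alpha Halpha) as [B HB].
  pose proof (K_B_ge0 alpha T HT K HK B HB) as HKB.
  split.
  - exists (K * B * exp alpha), 1%nat. intros [|j] Hj; [lia|].
    apply Rle_trans with (K * B * kC (alpha + 1) (S j)).
    + apply opnorm_le; [apply Rmult_le_pos; [exact HKB | left; apply kC_pos; lra]|].
      apply (oppow_norm_le alpha T Halpha HT K HK B HB).
    + replace (K * B * exp alpha * npow (S j) alpha)
        with ((K * B) * (exp alpha * npow (S j) alpha)) by ring.
      apply Rmult_le_compat_l; auto.
      apply kC_le_exp_npow; auto.
  - intros a Ha.
    destruct (Rsummable_kC_Cmod alpha a Halpha Ha) as [L HL].
    split; [apply (Rsummable_kC_Walpha alpha Halpha a L HL)|].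
    exists (psum_lim alpha T Halpha HT K HK B HB a L HL). split; [|split].
    + apply is_bounded_op_psum_lim.
    + apply opseries_conv_oppow.
    + apply opseries_conv_theta.
Qed.
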